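(* Let $A\subseteq\mathbb{R}^m$ and $B\subseteq\mathbb{R}^n$ be set-germs at $0$ with $0\in\overline{A}$ and $0\in\overline{B}$. Then $$D(A\times B)\subseteq\{(ta,\sqrt{1-t^2}\,b):\ a\in D(A),\ b\in D(B),\ t\in[0,1]\}.$$ Moreover, if both $A$ and $B$ satisfy condition (SSP), then equality holds.
   Context: For a set-germ $A\subset\mathbb{R}^k$ at $0$ with $0\in\overline A$, $D(A)=\{a\in S^{k-1}:\exists\, x_i\in A\setminus\{0\},\ x_i\to0,\ x_i/\|x_i\|\to a\}$ (for $A\times B$ this is computed in $\mathbb{R}^{m+n}$ at $(0,0)$). For sequences, $\|u_m\|\ll\|v_m\|,\|w_m\|$ means $\|u_m\|/\|v_m\|\to0$ and $\|u_m\|/\|w_m\|\to0$. $A$ satisfies condition (SSP) if for every sequence $a_m\in\mathbb{R}^k$ tending to $0$ with $\lim a_m/\|a_m\|\in D(A)$ there is a sequence $b_m\in A$ with $\|a_m-b_m\|\ll\|a_m\|,\|b_m\|$. *)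

From HB Require Import structures.
From mathcomp Require Import all_boot all_order all_algebra.
From mathcomp Require Import all_classical all_reals all_analysis.
Set Implicit Arguments. Unset Strict Implicit. Unset Printing Implicit Defensive.
Import Order.TTheory GRing.Theory Num.Theory.
Local Open Scope ring_scope.
Local Open Scope classical_set_scope.

Section Defs.
Variable R : realType.

Definition enorm (k : nat) (x : 'rV[R]_k) : R :=
  Num.sqrt (\sum_(i < k) x ord0 i ^+ 2).

Definition cvg0 (u : nat -> R) : Prop := u @ \oo --> (0 : R^o).

Definition vcvg (k : nat) (x : nat -> 'rV[R]_k) (a : 'rV[R]_k) : Prop :=
  cvg0 (fun n => enorm (x n - a)).

Definition acc0 (k : nat) (A : set 'rV[R]_k) : Prop :=
  forall e : R, 0 < e -> exists x, A x /\ x != 0 /\ enorm x < e.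

Definition Dir (k : nat) (A : set 'rV[R]_k) : set 'rV[R]_k :=
  [set a | enorm a = 1 /\
     exists x : nat -> 'rV[R]_k,
       (forall i, A (x i) /\ x i != 0) /\ vcvg x 0 /\
       vcvg (fun i => (enorm (x i))^-1 *: x i) a].

Definition SSP (k : nat) (A : set 'rV[R]_k) : Prop :=
  forall (a : nat -> 'rV[R]_k) (d : 'rV[R]_k),
    (forall i, a i != 0) -> vcvg a 0 ->
    vcvg (fun i => (enorm (a i))^-1 *: a i) d -> Dir A d ->
    exists b : nat -> 'rV[R]_k,
      (forall i, A (b i)) /\
      cvg0 (fun i => enorm (a i - b i) / enorm (a i)) /\
      cvg0 (fun i => enorm (a i - b i) / enorm (b i)).

Definition setprod (m n : nat) (A : set 'rV[R]_m) (B : set 'rV[R]_n)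
  : set 'rV[R]_(m + n) :=
  [set z | exists x y, A x /\ B y /\ z = row_mx x y].

Definition joinDir (m n : nat) (A : set 'rV[R]_m) (B : set 'rV[R]_n)
  : set 'rV[R]_(m + n) :=
  [set z | exists a b (t : R), Dir A a /\ Dir B b /\ 0 <= t /\ t <= 1 /\
     z = row_mx (t *: a) (Num.sqrt (1 - t ^+ 2) *: b)].

End Defs.

From mathcomp Require Import all_boot all_order all_algebra.
From mathcomp Require Import all_classical all_reals all_analysis.
Import Order.TTheory GRing.Theory Num.Theory.
Local Open Scope ring_scope.
Local Open Scope classical_set_scope.
Import numFieldTopology.Exports numFieldNormedType.Exports.

Set Implicit Arguments. Unset Strict Implicit.

(* If w_i = (x_i, y_i) in A x B tends to 0 along the direction z, then x_i/|w_i|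
   and y_i/|w_i| converge to the two blocks of z, of norms t and sqrt(1 - t^2).
   A nonzero block limit is its norm times a limit direction of the factor, and a
   zero block can be written as 0 times any direction, D(A) being nonempty by
   compactness of the unit sphere.  Conversely, given a in D(A), b in D(B) and t,
   (SSP) yields u_i in A and v_i in B with (i+1) u_i -> t a and
   (i+1) v_i -> sqrt(1 - t^2) b, so (u_i, v_i) tends to 0 in A x B along
   (t a, sqrt(1 - t^2) b). *)

Section euclidean_norm.
Variable R : realType.
Implicit Types k : nat.

Lemma enorm_ge0 k (x : 'rV[R]_k) : 0 <= enorm x.
Proof. exact: sqrtr_ge0. Qed.

Lemma sqr_enorm k (x : 'rV[R]_k) : enorm x ^+ 2 = \sum_(i < k) x ord0 i ^+ 2.
Proof. by rewrite sqr_sqrtr // sumr_ge0 // => i _; exact: sqr_ge0. Qed.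

Lemma normr_coord_le_enorm k (x : 'rV[R]_k) j : `|x ord0 j| <= enorm x.
Proof.
rewrite -(ler_sqr (normr_ge0 _) (enorm_ge0 x)) sqr_enorm real_normK ?num_real //.
by rewrite (bigD1 j) //= lerDl sumr_ge0 // => i _; exact: sqr_ge0.
Qed.

Lemma enorm0 k : enorm (0 : 'rV[R]_k) = 0.
Proof. by rewrite /enorm big1 ?sqrtr0 // => i _; rewrite mxE expr0n. Qed.

Lemma enorm_gt0 k (x : 'rV[R]_k) : x != 0 -> 0 < enorm x.
Proof.
apply: contraNT; rewrite -leNgt => x_le0; apply/eqP/rowP => j; rewrite mxE.
apply/normr0_eq0/le_anti; rewrite normr_ge0 andbT.
exact: le_trans (normr_coord_le_enorm x j) x_le0.
Qed.

Lemma enormZ k c (x : 'rV[R]_k) : enorm (c *: x) = `|c| * enorm x.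
Proof.
rewrite /enorm (eq_bigr (fun i => c ^+ 2 * x ord0 i ^+ 2)); last first.
  by move=> i _; rewrite mxE exprMn.
by rewrite -mulr_sumr sqrtrM ?sqr_ge0 // sqrtr_sqr.
Qed.

Lemma sqr_enorm_row_mx m n (x : 'rV[R]_m) (y : 'rV[R]_n) :
  enorm (row_mx x y) ^+ 2 = enorm x ^+ 2 + enorm y ^+ 2.
Proof.
rewrite !sqr_enorm big_split_ord /=.
by congr (_ + _); apply: eq_bigr => i _; rewrite ?row_mxEl ?row_mxEr.
Qed.

Lemma enorm_normalize k (x : 'rV[R]_k) : x != 0 -> enorm ((enorm x)^-1 *: x) = 1.
Proof.
move=> /enorm_gt0 x_gt0.
by rewrite enormZ gtr0_norm ?invr_gt0 // mulVf // gt_eqF.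
Qed.

Lemma normalizeZ k c (x : 'rV[R]_k) : 0 < c ->
  (enorm (c *: x))^-1 *: (c *: x) = (enorm x)^-1 *: x.
Proof.
move=> c_gt0; rewrite enormZ gtr0_norm // invfM scalerA mulrAC mulVf ?mul1r //.
by rewrite gt_eqF.
Qed.

Definition cvg_entries k (x : nat -> 'rV[R]_k) (a : 'rV[R]_k) :=
  forall j, (fun i => x i ord0 j) @ \oo --> a ord0 j.

Lemma cvg_entries_enorm k (x : nat -> 'rV[R]_k) a : cvg_entries x a ->
  (fun i => enorm (x i)) @ \oo --> enorm a.
Proof.
move=> xa; apply: (continuous_cvg _ (@sqrt_continuous R _)).
apply: cvg_big => //; first exact: add_continuous.
by move=> j _; rewrite expr2; under eq_cvg do rewrite expr2; exact: cvgM.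
Qed.

Lemma vcvg_entriesP k (x : nat -> 'rV[R]_k) a : vcvg x a <-> cvg_entries x a.
Proof.
split=> [xa j|xa].
  apply/subr_cvg0.
  apply: (@squeeze_cvgr _ _ _ _
    (fun i => - enorm (x i - a)) (fun i => enorm (x i - a))).
  - apply: nearW => i; rewrite -ler_norml.
    by have := normr_coord_le_enorm (x i - a) j; rewrite !mxE.
  - by rewrite -oppr0; apply: cvgN; exact: xa.
  - exact: xa.
rewrite /vcvg /cvg0 -(enorm0 k); apply: cvg_entries_enorm => j.
by rewrite mxE; under eq_cvg do rewrite !mxE; exact/subr_cvg0/xa.
Qed.

Lemma cvg_entriesZ k (c : nat -> R) (c0 : R) (x : nat -> 'rV[R]_k) a :
  c @ \oo --> c0 -> cvg_entries x a -> cvg_entries (fun i => c i *: x i) (c0 *: a).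
Proof. by move=> cc xa j; rewrite mxE; under eq_cvg do rewrite mxE; exact: cvgM. Qed.

Lemma cvg_entriesD k (x y : nat -> 'rV[R]_k) a b :
  cvg_entries x a -> cvg_entries y b -> cvg_entries (fun i => x i + y i) (a + b).
Proof. by move=> xa yb j; rewrite mxE; under eq_cvg do rewrite mxE; exact: cvgD. Qed.

Lemma cvg_entries_row_mx m n (x : nat -> 'rV[R]_m) (y : nat -> 'rV[R]_n) a b :
  cvg_entries x a -> cvg_entries y b ->
  cvg_entries (fun i => row_mx (x i) (y i)) (row_mx a b).
Proof.
move=> xa yb j; case: (split_ordP j) => l ->.
  by rewrite row_mxEl; under eq_cvg do rewrite row_mxEl; exact: xa.
by rewrite row_mxEr; under eq_cvg do rewrite row_mxEr; exact: yb.
Qed.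

Lemma cvg_entries_lsubmx m n (w : nat -> 'rV[R]_(m + n)) z :
  cvg_entries w z -> cvg_entries (fun i => lsubmx (w i)) (lsubmx z).
Proof. by move=> wz j; rewrite mxE; under eq_cvg do rewrite mxE; exact: wz. Qed.

Lemma cvg_entries_rsubmx m n (w : nat -> 'rV[R]_(m + n)) z :
  cvg_entries w z -> cvg_entries (fun i => rsubmx (w i)) (rsubmx z).
Proof. by move=> wz j; rewrite mxE; under eq_cvg do rewrite mxE; exact: wz. Qed.

Lemma cvg_entries_to0 k (x : nat -> 'rV[R]_k) (e : nat -> R) :
  (forall i, enorm (x i) <= e i) -> e @ \oo --> 0 -> cvg_entries x 0.
Proof.
move=> xe e0; apply/vcvg_entriesP.
apply: (@squeeze_cvgr _ _ _ _ (fun=> 0) e) => //; last exact: cvg_cst.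
by apply: nearW => i; rewrite subr0 enorm_ge0 xe.
Qed.

Lemma enorm_lim_eq1 k (x : nat -> 'rV[R]_k) a :
  cvg_entries x a -> (\forall i \near \oo, enorm (x i) = 1) -> enorm a = 1.
Proof.
move=> xa /cvg_near_cst to1.
exact: (@cvg_unique R (@norm_hausdorff _ R^o) _ _ _ _ (cvg_entries_enorm xa) to1).
Qed.

End euclidean_norm.

Section limit_directions.
Variable R : realType.
Implicit Types k : nat.

Lemma Dir_of_cvg k (A : set 'rV[R]_k) (x : nat -> 'rV[R]_k) a :
  (forall i, A (x i)) -> (\forall i \near \oo, x i != 0) -> cvg_entries x 0 ->
  cvg_entries (fun i => (enorm (x i))^-1 *: x i) a -> Dir A a.
Proof.
move=> Ax x_neq0 x0 xa; split.
  by apply: enorm_lim_eq1 xa _; apply: filterS x_neq0 => i; exact: enorm_normalize.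
have [N _ xN_neq0] := x_neq0.
exists (fun i => x (i + N)%N); split; [|split].
- by move=> i; split => //; apply: xN_neq0; rewrite /= leq_addl.
- by apply/vcvg_entriesP => j; have := x0 j; rewrite -(cvg_shiftn N).
- by apply/vcvg_entriesP => j; have := xa j; rewrite -(cvg_shiftn N).
Qed.

Lemma Dir_of_scaled_cvg k (A : set 'rV[R]_k) (x : nat -> 'rV[R]_k)
    (r : nat -> R) c :
  (forall i, A (x i)) -> cvg_entries x 0 -> (forall i, 0 < r i) -> c != 0 ->
  cvg_entries (fun i => (r i)^-1 *: x i) c -> Dir A ((enorm c)^-1 *: c).
Proof.
move=> Ax x0 r_gt0 c_neq0 xr_c; have xr_norm := cvg_entries_enorm xr_c.
have c_gt0 := enorm_gt0 c_neq0.
apply: (Dir_of_cvg Ax _ x0).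
  near=> i; have : 0 < enorm ((r i)^-1 *: x i).
    by near: i; exact: cvgr_gt xr_norm _ c_gt0.
  by apply: contraTneq => ->; rewrite scaler0 enorm0 ltxx.
have -> : (fun i => (enorm (x i))^-1 *: x i) =
    (fun i => (enorm ((r i)^-1 *: x i))^-1 *: ((r i)^-1 *: x i)).
  by apply: funext => i; rewrite normalizeZ // invr_gt0.
by apply: cvg_entriesZ xr_c; apply: cvgV xr_norm; rewrite gt_eqF.
Unshelve. all: end_near.
Qed.

Lemma unit_seq_cluster k (u : nat -> 'rV[R]_k) : (forall i, enorm (u i) = 1) ->
  exists a (phi : nat -> nat),
    (forall l, (l <= phi l)%N) /\ cvg_entries (fun l => u (phi l)) a.
Proof.
move=> u1.
pose K := [set v : 'rV[R]_k | forall j, `[(-1 : R), 1]%classic (v ord0 j)].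
have K_compact : compact K.
  apply: (@rV_compact _ _ (fun=> `[(-1 : R), 1]%classic)) => j.
  exact: segment_compact.
have uK : (u @ \oo) K.
  exists 0%N => // i _ j /=; rewrite in_itv /= -ler_norml -(u1 i).
  exact: normr_coord_le_enorm.
have [a [_ u_cluster_a]] := K_compact _ _ uK.
have [phi phiP] : exists phi : nat -> nat,
    forall l, (l <= phi l)%N /\ ball a (harmonic l) (u (phi l)).
  suff /choice[phi phiP] : forall l, exists i,
      (l <= i)%N /\ ball a (harmonic l) (u i) by exists phi.
  move=> l; have u_tail : (u @ \oo) [set u i | i in [set i | (l <= i)%N]].
    by exists l => // i li; exists i.
  have [_ [[i li <-] uia]] := u_cluster_a _ _ u_tail
    (nbhsx_ballx _ _ (harmonic_gt0 l)).
  by exists i.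
exists a, phi; split=> [l|j]; first by case: (phiP l).
apply/cvgrPdist_lt => e e_gt0; near=> l.
have [_ [_ /(_ ord0 j) /lt_trans]] := phiP l; apply.
near: l; have /cvgr0Pnorm_lt := @cvg_harmonic R.
by move=> /(_ _ e_gt0); apply: filterS => l; rewrite ger0_norm // harmonic_ge0.
Unshelve. all: end_near.
Qed.

Lemma Dir_nonempty k (A : set 'rV[R]_k) : acc0 A -> exists a, Dir A a.
Proof.
move=> A_acc.
have [x xP] : exists x : nat -> 'rV[R]_k,
    forall i, [/\ A (x i), x i != 0 & enorm (x i) < harmonic i].
  suff /choice[x xP] : forall i, exists y,
      [/\ A y, y != 0 & enorm y < harmonic i] by exists x.
  by move=> i; have [y [? [? ?]]] := A_acc _ (harmonic_gt0 i); exists y.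
have x_neq0 i : x i != 0 by case: (xP i).
have [a [phi [phi_ge xphi_a]]] :=
  unit_seq_cluster (fun i => enorm_normalize (x_neq0 i)).
exists a; apply: (@Dir_of_cvg _ _ (fun l => x (phi l))) xphi_a.
- by move=> l; case: (xP (phi l)).
- exact: nearW.
- apply: (@cvg_entries_to0 _ _ _ harmonic) cvg_harmonic => l.
  have [_ _ /ltW /le_trans] := xP (phi l); apply.
  by rewrite /harmonic /= lef_pV2 ?posrE // ler_nat ltnS.
Qed.

Lemma scaled_limit_in_Dir_cone k (A : set 'rV[R]_k) (x : nat -> 'rV[R]_k)
    (r : nat -> R) c :
  acc0 A -> (forall i, A (x i)) -> cvg_entries x 0 -> (forall i, 0 < r i) ->
  cvg_entries (fun i => (r i)^-1 *: x i) c -> exists2 a, Dir A a & c = enorm c *: a.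
Proof.
move=> A_acc Ax x0 r_gt0 xr_c.
have [c0|c_neq0] := eqVneq c 0.
  by have [a Da] := Dir_nonempty A_acc; exists a; rewrite // c0 enorm0 scale0r.
exists ((enorm c)^-1 *: c); first exact: Dir_of_scaled_cvg xr_c.
by rewrite scalerA divff ?gt_eqF ?enorm_gt0 // scale1r.
Qed.

Lemma SSP_scaled_approx k (A : set 'rV[R]_k) a (t : R) :
  SSP A -> Dir A a -> 0 <= t ->
  exists2 u : nat -> 'rV[R]_k, (forall i, A (u i)) &
    cvg_entries (fun i => (harmonic i)^-1 *: u i) (t *: a).
Proof.
move=> A_SSP Da t_ge0; have a1 : enorm a = 1 by case: Da.
(* Perturbing t by harmonic i keeps the points v i below nonzero when t = 0. *)
pose s i := t + harmonic i.
have s_t : s @ \oo --> t.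
  by rewrite -[X in _ --> X]addr0; apply: cvgD cvg_harmonic; exact: cvg_cst.
have s_gt0 i : 0 < s i by rewrite ltr_wpDl ?harmonic_gt0.
have sh_gt0 i : 0 < s i * harmonic i by rewrite mulr_gt0 ?harmonic_gt0.
pose v i := (s i * harmonic i) *: a.
have v_norm i : enorm (v i) = s i * harmonic i.
  by rewrite enormZ a1 mulr1 gtr0_norm.
have [b [Ab [vb_small _]]] : exists b : nat -> 'rV[R]_k, (forall i, A (b i)) /\
    cvg0 (fun i => enorm (v i - b i) / enorm (v i)) /\
    cvg0 (fun i => enorm (v i - b i) / enorm (b i)).
  apply: (A_SSP v a) => //.
  - move=> i; apply: contraTneq (sh_gt0 i) => v0.
    by rewrite -v_norm v0 enorm0 ltxx.
  - apply/vcvg_entriesP; rewrite -(scale0r a); apply: cvg_entriesZ => [|j].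
      by rewrite -(mulr0 t); apply: cvgM s_t cvg_harmonic.
    exact: cvg_cst.
  - under eq_fun do rewrite normalizeZ // a1 invr1 scale1r.
    by apply/vcvg_entriesP => j; exact: cvg_cst.
exists b => //.
have -> : (fun i => (harmonic i)^-1 *: b i) =
    (fun i => s i *: a + (- (harmonic i)^-1) *: (v i - b i)).
  apply: funext => i; rewrite scalerBr !scaleNr opprK scalerA mulrCA.
  by rewrite mulVf ?gt_eqF ?harmonic_gt0 // mulr1 addNKr.
rewrite -[X in cvg_entries _ X]addr0; apply: cvg_entriesD.
  by apply: cvg_entriesZ s_t _ => j; exact: cvg_cst.
apply: (@cvg_entries_to0 _ _ _ (fun i => s i * (enorm (v i - b i) / enorm (v i)))).
  move=> i; rewrite enormZ normrN gtr0_norm ?invr_gt0 ?harmonic_gt0 // v_norm.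
  by rewrite invfM mulrCA mulVKf ?gt_eqF // mulrC.
by rewrite -(mulr0 t); apply: cvgM s_t vb_small.
Qed.

End limit_directions.

Section product_directions.
Variables (R : realType) (m n : nat) (A : set 'rV[R]_m) (B : set 'rV[R]_n).

Lemma Dir_setprod_sub_joinDir :
  acc0 A -> acc0 B -> Dir (setprod A B) `<=` joinDir A B.
Proof.
move=> A_acc B_acc z [z1 [w [wP [w0 wz]]]].
move/vcvg_entriesP: w0 => w0; move/vcvg_entriesP: wz => wz.
have w_gt0 i : 0 < enorm (w i) by apply: enorm_gt0; case: (wP i).
have AB_w i : A (lsubmx (w i)) /\ B (rsubmx (w i)).
  by case: (wP i) => -[x [y [Ax [By ->]]]] _; rewrite row_mxKl row_mxKr.
have [a Da za] : exists2 a, Dir A a & lsubmx z = enorm (lsubmx z) *: a.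
  apply: (scaled_limit_in_Dir_cone A_acc (fun i => (AB_w i).1) _ w_gt0).
    by have := cvg_entries_lsubmx w0; rewrite linear0.
  have := cvg_entries_lsubmx wz.
  by congr cvg_entries; apply: funext => i; rewrite linearZ.
have [b Db zb] : exists2 b, Dir B b & rsubmx z = enorm (rsubmx z) *: b.
  apply: (scaled_limit_in_Dir_cone B_acc (fun i => (AB_w i).2) _ w_gt0).
    by have := cvg_entries_rsubmx w0; rewrite linear0.
  have := cvg_entries_rsubmx wz.
  by congr cvg_entries; apply: funext => i; rewrite linearZ.
set t := enorm (lsubmx z) in za; set s := enorm (rsubmx z) in zb.
have ts1 : t ^+ 2 + s ^+ 2 = 1 by rewrite -sqr_enorm_row_mx hsubmxK z1 expr1n.
have t_ge0 : 0 <= t := enorm_ge0 _.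
exists a, b, t; do 4?split => //.
  by rewrite -(expr_le1 (n := 2)) // -ts1 lerDl sqr_ge0.
rewrite -ts1 addrAC subrr add0r sqrtr_sqr ger0_norm ?enorm_ge0 //.
by rewrite -za -zb hsubmxK.
Qed.

Lemma joinDir_sub_Dir_setprod :
  SSP A -> SSP B -> joinDir A B `<=` Dir (setprod A B).
Proof.
move=> A_SSP B_SSP _ [a [b [t [Da [Db [t_ge0 [t_le1 ->]]]]]]].
set s := Num.sqrt (1 - t ^+ 2); set z := row_mx (t *: a) (s *: b).
have [u Au ua] := SSP_scaled_approx A_SSP Da t_ge0.
have [v Bv vb] := SSP_scaled_approx B_SSP Db (sqrtr_ge0 (1 - t ^+ 2)).
have z1 : enorm z = 1.
  have [[a1 _] [b1 _]] := (Da, Db).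
  apply/eqP; rewrite -sqrp_eq1 ?enorm_ge0 // sqr_enorm_row_mx !enormZ a1 b1 !mulr1.
  by rewrite !real_normK ?num_real // sqr_sqrtr ?subr_ge0 ?expr_le1 // addrC subrK.
pose w i := row_mx (u i) (v i).
have wz : cvg_entries (fun i => (harmonic i)^-1 *: w i) z.
  by under eq_fun do rewrite scale_row_mx; exact: cvg_entries_row_mx.
have w0 : cvg_entries w 0.
  have -> : w = fun i => harmonic i *: ((harmonic i)^-1 *: w i).
    by apply: funext => i; rewrite scalerA divff ?scale1r // gt_eqF ?harmonic_gt0.
  by rewrite -(scale0r z); exact: cvg_entriesZ cvg_harmonic wz.
have z_neq0 : z != 0.
  by apply: contra_eq_neq z1 => ->; rewrite enorm0 eq_sym oner_neq0.
have ABw i : setprod A B (w i) by exists (u i), (v i).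
have := Dir_of_scaled_cvg ABw w0 harmonic_gt0 z_neq0 wz.
by rewrite z1 invr1 scale1r.
Qed.

End product_directions.

Unset Implicit Arguments. Set Strict Implicit.

Theorem proposition2p34 (R : realType) (m n : nat)
  (A : set 'rV[R]_m) (B : set 'rV[R]_n) :
  acc0 A -> acc0 B ->
  Dir (setprod A B) `<=` joinDir A B /\
  (SSP A -> SSP B -> Dir (setprod A B) = joinDir A B).
Proof.
move=> A_acc B_acc; have DirAB_sub := Dir_setprod_sub_joinDir A_acc B_acc.
split=> // A_SSP B_SSP; apply/seteqP; split=> //.
exact: joinDir_sub_Dir_setprod.
Qed.
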